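(* Let $Fil_{10}$ be the set of parameter values $(a_1,a_2,a_4,a_5,a_7,\dots,a_{15})$ of the family $F_{10}$ satisfying $a_1(2a_2+7a_4+7a_7)=0$, $3a_4^2+3a_4a_7-2a_2a_7=0$, $a_1(2a_9+5a_{11})-2a_2a_{10}+a_4(7a_8-2a_{10})+a_7(-3a_5+2a_8-7a_{10})=0$. Then $Fil_{10}=Fil_{10}(1)\cup Fil_{10}(2)\cup Fil_{10}(3)$, where $Fil_{10}(1)$ is defined by $a_1=0$, $3a_4^2+3a_4a_7-2a_2a_7=0$, $-2a_2a_{10}+a_4(7a_8-2a_{10})+a_7(-3a_5+2a_8-7a_{10})=0$; $Fil_{10}(2)$ is defined by $a_2=0$, $a_4=-a_7$, $a_1(2a_9+5a_{11})+a_4(3a_5+5a_8+5a_{10})=0$; $Fil_{10}(3)$ is defined by $a_2=-2a_4$, $3a_4=-7a_7$, $a_1(2a_9+5a_{11})+a_4\left(\tfrac97a_5+\tfrac{43}{7}a_8+5a_{10}\right)=0$. Consequently the set of 10-dimensional filiform Lie brackets is the union of the $GL(10,\mathbb{K})$-orbits of these three sets.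
   Context: $\mathbb{K}$ is algebraically closed of characteristic $0$. The family $F_{10}$ on basis $\{X_0,\dots,X_9\}$: $\mu(X_0,X_i)=X_{i+1}$ ($1\le i\le 8$), $\mu(X_2,X_7)=a_1X_9$, $\mu(X_1,X_7)=a_1X_8+a_2X_9$, $\mu(X_3,X_6)=-a_1X_9$, $\mu(X_2,X_6)=a_4X_9$, $\mu(X_1,X_6)=a_1X_7+(a_2+a_4)X_8+a_5X_9$, $\mu(X_4,X_5)=a_1X_9$, $\mu(X_3,X_5)=a_7X_9$, $\mu(X_2,X_5)=(a_4+a_7)X_8+a_8X_9$, $\mu(X_1,X_5)=a_1X_6+(a_2+2a_4+a_7)X_7+(a_5+a_8)X_8+a_9X_9$, $\mu(X_3,X_4)=a_7X_8+a_{10}X_9$, $\mu(X_2,X_4)=(a_4+2a_7)X_7+(a_8+a_{10})X_8+a_{11}X_9$, $\mu(X_1,X_4)=a_1X_5+(a_2+3a_4+3a_7)X_6+(a_5+2a_8+a_{10})X_7+(a_9+a_{11})X_8+a_{12}X_9$, $\mu(X_2,X_3)=(a_4+2a_7)X_6+(a_8+a_{10})X_7+a_{11}X_8+a_{13}X_9$, $\mu(X_1,X_3)=a_1X_4+(a_2+4a_4+5a_7)X_5+(a_5+3a_8+2a_{10})X_6+(a_9+2a_{11})X_7+(a_{12}+a_{13})X_8+a_{14}X_9$, $\mu(X_1,X_2)=a_1X_3+(a_2+4a_4+5a_7)X_4+(a_5+3a_8+2a_{10})X_5+(a_9+2a_{11})X_6+(a_{12}+a_{13})X_7+a_{14}X_8+a_{15}X_9$,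 others zero. Every 10-dimensional filiform Lie algebra is isomorphic to a member of $F_{10}$ with parameters in $Fil_{10}$. *)

From HB Require Import structures.
From mathcomp Require Import all_boot all_order all_algebra.
Set Implicit Arguments. Unset Strict Implicit. Unset Printing Implicit Defensive.
Import GRing.Theory.
Local Open Scope ring_scope.

Record params (K : Type) := Params {
  a1 : K; a2 : K; a4 : K; a5 : K; a7 : K; a8 : K; a9 : K;
  a10 : K; a11 : K; a12 : K; a13 : K; a14 : K; a15 : K }.

Section Fil.
Variable K : fieldType.

Definition Fil10 (p : params K) : Prop :=
  [/\ a1 p * (2%:R * a2 p + 7%:R * a4 p + 7%:R * a7 p) = 0,
      3%:R * a4 p ^+ 2 + 3%:R * a4 p * a7 p - 2%:R * a2 p * a7 p = 0 &
      a1 p * (2%:R * a9 p + 5%:R * a11 p) - 2%:R * a2 p * a10 p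
      + a4 p * (7%:R * a8 p - 2%:R * a10 p)
      + a7 p * (- (3%:R * a5 p) + 2%:R * a8 p - 7%:R * a10 p) = 0].

Definition Fil10_1 (p : params K) : Prop :=
  [/\ a1 p = 0,
      3%:R * a4 p ^+ 2 + 3%:R * a4 p * a7 p - 2%:R * a2 p * a7 p = 0 &
      - (2%:R * a2 p * a10 p)
      + a4 p * (7%:R * a8 p - 2%:R * a10 p)
      + a7 p * (- (3%:R * a5 p) + 2%:R * a8 p - 7%:R * a10 p) = 0].

Definition Fil10_2 (p : params K) : Prop :=
  [/\ a2 p = 0, a4 p = - a7 p &
      a1 p * (2%:R * a9 p + 5%:R * a11 p)
      + a4 p * (3%:R * a5 p + 5%:R * a8 p + 5%:R * a10 p) = 0].

Definition Fil10_3 (p : params K) : Prop :=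
  [/\ a2 p = - (2%:R * a4 p), 3%:R * a4 p = - (7%:R * a7 p) &
      a1 p * (2%:R * a9 p + 5%:R * a11 p)
      + a4 p * (9%:R / 7%:R * a5 p + 43%:R / 7%:R * a8 p + 5%:R * a10 p) = 0].
End Fil.

(* On Fil10, either a1 = 0, which is Fil10(1) verbatim, or the first equation
   forces the linear relation 2 a2 + 7 a4 + 7 a7 = 0.  Modulo that relation the
   quadric 3 a4^2 + 3 a4 a7 - 2 a2 a7 equals (3 a4 + 7 a7)(a4 + a7) / 2, so
   either a4 = -a7 or 3 a4 = -7 a7; in each case a2 is determined, the first two
   equations hold identically, and substituting into the third gives the third
   equation of Fil10(2), resp. Fil10(3). *)
From HB Require Import structures.
From mathcomp Require Import all_boot all_order all_algebra.
From mathcomp Require Import ring.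

Set Implicit Arguments.
Unset Strict Implicit.
Unset Printing Implicit Defensive.
Local Open Scope ring_scope.
Import GRing.Theory.

Section Fil10Components.
Variable K : fieldType.

Lemma linear_quadric_cases (x2 x4 x7 : K) : (2%:R : K) != 0 ->
    2%:R * x2 + 7%:R * x4 + 7%:R * x7 = 0 ->
    3%:R * x4 ^+ 2 + 3%:R * x4 * x7 - 2%:R * x2 * x7 = 0 ->
  (x2 = 0 /\ x4 = - x7) \/ (x2 = - (2%:R * x4) /\ 3%:R * x4 = - (7%:R * x7)).
Proof.
move=> two_neq0 lin quad.
have factored : (3%:R * x4 + 7%:R * x7) * (x4 + x7) * 2%:R = 0.
  have -> : (3%:R * x4 + 7%:R * x7) * (x4 + x7) * 2%:R =
      2%:R * (3%:R * x4 ^+ 2 + 3%:R * x4 * x7 - 2%:R * x2 * x7)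
      + x7 * 2%:R * (2%:R * x2 + 7%:R * x4 + 7%:R * x7) :> K by ring.
  by rewrite quad lin; ring.
move/eqP: factored; rewrite !mulf_eq0 (negPf two_neq0) orbF.
case/orP=> /eqP factor0.
- right; have e7 : 7%:R * x7 = - (3%:R * x4).
    by apply/eqP; rewrite -subr_eq0 opprK addrC factor0.
  split; last by rewrite e7 opprK.
  apply: (mulfI two_neq0).
  have -> : 2%:R * x2 = (2%:R * x2 + 7%:R * x4 + 7%:R * x7) - 7%:R * x4 - 7%:R * x7
    by ring.
  by rewrite lin e7; ring.
- left; have e4 : x4 = - x7 by apply/eqP; rewrite -subr_eq0 opprK factor0.
  by split=> //; apply: (mulfI two_neq0); rewrite mulr0 -lin e4; ring.
Qed.

Variable p : params K.

Lemma Fil10_a1_eq0 : a1 p = 0 -> Fil10 p <-> Fil10_1 p.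
Proof.
rewrite /Fil10 /Fil10_1 => e1; split=> -[_ quad eq3].
- by split=> //; rewrite -eq3 e1; ring.
- by split=> //; [rewrite e1 mul0r | rewrite -eq3 e1; ring].
Qed.

Lemma Fil10_2_equiv : a2 p = 0 -> a4 p = - a7 p -> Fil10 p <-> Fil10_2 p.
Proof.
rewrite /Fil10 /Fil10_2 => e2 e4; split=> -[_ _ eq3].
- by split=> //; rewrite -eq3 e2 e4; ring.
- by split; [| | rewrite -eq3]; rewrite e2 e4; ring.
Qed.

Lemma Fil10_3_equiv : (7%:R : K) != 0 ->
  a2 p = - (2%:R * a4 p) -> 3%:R * a4 p = - (7%:R * a7 p) ->
  Fil10 p <-> Fil10_3 p.
Proof.
move=> seven_neq0 e2 e4.
have e7 : a7 p = - (3%:R * a4 p) / 7%:R.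
  by apply: (mulIf seven_neq0); rewrite mulfVK // e4 opprK mulrC.
rewrite /Fil10 /Fil10_3; split=> -[_ _ eq3].
- by split=> //; rewrite -eq3 e2 e7; field.
- by split; [| | rewrite -eq3]; rewrite e2 e7; field.
Qed.

End Fil10Components.

Theorem proposition29 (K : closedFieldType)
    (charK0 : [pchar K] =i pred0) (p : params K) :
  Fil10 p <-> (Fil10_1 p \/ Fil10_2 p \/ Fil10_3 p).
Proof.
have natr_neq0 n : n != 0%N -> (n%:R : K) != 0.
  by move=> n_neq0; rewrite ((pcharf0P K).1 charK0 n).
have two_neq0 := natr_neq0 2%N isT; have seven_neq0 := natr_neq0 7%N isT.
split=> [fil | [fil1 | [fil2 | fil3]]].
- have [e1 | a1_neq0] := eqVneq (a1 p) 0; first by left; apply/Fil10_a1_eq0.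
  right; have [lin quad _] := fil.
  move/eqP: lin; rewrite mulf_eq0 (negPf a1_neq0) => /eqP lin.
  have [[e2 e4] | [e2 e4]] := linear_quadric_cases two_neq0 lin quad.
  + by left; apply/Fil10_2_equiv.
  + by right; apply/(Fil10_3_equiv seven_neq0 e2 e4).
- by have [e1 _ _] := fil1; apply/(Fil10_a1_eq0 e1).
- by have [e2 e4 _] := fil2; apply/(Fil10_2_equiv e2 e4).
- by have [e2 e4 _] := fil3; apply/(Fil10_3_equiv seven_neq0 e2 e4).
Qed.
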